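(* Let $n$ be an even integer, and let $d, \rho, \alpha, \gamma > 0$. Let $G$ be a regular graph on $[n]$. Let $\{X,Y\}$ be a balanced bipartition of $[n]$, and suppose that $G[X,Y]$ is $(d,\rho,\alpha,\gamma)$-good. Suppose further that for some integer $K$ with $\frac{\rho}{\alpha}\leq K \leq \frac{\gamma \rho d}{2}$ there exist decompositions $\{H_{X,j}\}_{j \in [K]}$ of $G[X]$ and $\{H_{Y,j}\}_{j \in [K]}$ of $G[Y]$ into bipartite spanning subgraphs (each $H_{X,j}$ has vertex set $X$, each $H_{Y,j}$ has vertex set $Y$) such that for each $j \in [K]$: (A1) for each $U \in \{X,Y\}$, $\Delta(H_{U,j}) - \delta(H_{U,j}) \leq \frac{\gamma \rho d}{4K}$; (A2) $e(H_{X,j}) = e(H_{Y,j})$; (A3) $H_{X,j}$ and $H_{Y,j}$ have respective bipartitions $\{X_j', X_j''\}$ of $X$ and $\{Y_j', Y_j''\}$ of $Y$ (every edge of $H_{X,j}$ goes between $X'_j$ and $X''_j$, every edge of $H_{Y,j}$ goes between $Y'_j$ and $Y''_j$) which are $\frac{d}{5}$-good with respect to $G[X,Y]$. Then there exists a decomposition of $G$ into $K+1$ regular bipartite spanning subgraphs.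
   Context: Graphs are simple and finite. $G[U]$ is the induced subgraph on $U$; for disjoint $X,Y$, $G[X,Y]$ is the bipartite graph on $X\cup Y$ of all edges of $G$ between $X$ and $Y$. A balanced bipartition $\{X,Y\}$ has $|X|=|Y|$. A decomposition of a graph is a collection of pairwise edge-disjoint subgraphs whose edge sets cover all edges. $e(\cdot)$, $\Delta(\cdot)$, $\delta(\cdot)$ denote number of edges, maximum and minimum degree. For a function $f:V(H)\to\mathbb N$, an $f$-factor of $H$ is a spanning subgraph in which every vertex $v$ has degree $f(v)$; $f(S):=\sum_{v\in S}f(v)$. Definition ($d$-good bipartition): for a balanced bipartite graph $H=(X\cup Y,E)$ and $d>0$, a bipartition $\{X',X''\}$ of $X$ is $d$-good with respect to $H$ if $\big||X'|-|X''|\big|\leq1$ and $|N_H(y)\cap X'|,|N_H(y)\cap X''|\geq d$ for every $y\in Y$; a $d$-good bipartition of $Y$ is defined analogously. Definition (robustly matchable): a balanced bipartite graph $H=(X\cup Y,E)$ is $(d,\rho,\alpha,\gamma)$-robustly matchable if for every subgraph $F\subseteq H$ of maximum degree at most $\rho d$ and every real $0<\alpha'\leq\alpha$, the graph with edge set $E(H)\setminus E(F)$ has an $f$-factor for every integer-valued $f:X\cup Y\to[(1-\gamma)\alpha' d,\alpha' d]$ with $f(X)=f(Y)$. Definition (good): $H=(X\cup Y,E)$ balanced bipartite is $(d,\rho,\alpha,\gamma)$-good if for all $X'\subseteq X$, $Y'\subseteq Y$ with $|X'|=|Y'|$ and $\delta(H[X',Y'])\geq\frac d5$, the graph $H[X',Y']$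 is $(d,\rho,\alpha,\gamma)$-robustly matchable. *)

From HB Require Import structures.
From mathcomp Require Import all_boot all_order all_algebra.
From mathcomp Require Import reals.
Set Implicit Arguments. Unset Strict Implicit. Unset Printing Implicit Defensive.
Import Order.TTheory GRing.Theory Num.Theory.
Local Open Scope ring_scope.

Section Graphs.
Variable T : finType.

Definition simple_graph (E : rel T) : Prop := symmetric E /\ irreflexive E.

Definition subrel_of (F E : rel T) : Prop := forall u v, F u v -> E u v.

Definition deg (E : rel T) (v : T) : nat := #|[set u | E v u]|.

(* maximum / minimum degree over the vertex set V (0 if V is empty) *)
Definition maxdeg (V : {set T}) (E : rel T) : nat := \max_(v in V) deg E v.
Definition mindeg (V : {set T}) (E : rel T) : nat :=
  \big[minn/maxdeg V E]_(v in V) deg E v.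

Definition nedges (E : rel T) : nat := #|[set p : T * T | E p.1 p.2]|./2.

Definition regular_on (V : {set T}) (E : rel T) : Prop :=
  exists r : nat, forall v, v \in V -> deg E v = r.

Definition induced (E : rel T) (U : {set T}) : rel T :=
  fun u v => [&& E u v, u \in U & v \in U].

Definition bip (E : rel T) (X Y : {set T}) : rel T :=
  fun u v => E u v && (((u \in X) && (v \in Y)) || ((u \in Y) && (v \in X))).

Definition rdiff (E F : rel T) : rel T := fun u v => E u v && ~~ F u v.

Definition decomposition (I : finType) (E : rel T) (H : I -> rel T) : Prop :=
  (forall j, symmetric (H j)) /\
  (forall u v, E u v = [exists j, H j u v]) /\
  (forall j k u v, j != k -> H j u v -> ~~ H k u v).

Definition has_f_factor (V : {set T}) (E : rel T) (f : T -> int) : Prop :=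
  exists S : rel T, [/\ symmetric S, subrel_of S E &
     forall v, v \in V -> (deg S v)%:Z = f v].

Variable R : realType.

Definition robustly_matchable (X Y : {set T}) (E : rel T)
    (d rho alpha gamma : R) : Prop :=
  forall F : rel T, symmetric F -> subrel_of F E ->
    (maxdeg (X :|: Y) F)%:R <= rho * d ->
  forall alpha' : R, 0 < alpha' -> alpha' <= alpha ->
  forall f : T -> int,
    (forall v, v \in X :|: Y ->
       (1 - gamma) * alpha' * d <= (f v)%:~R /\ (f v)%:~R <= alpha' * d) ->
    \sum_(x in X) f x = \sum_(y in Y) f y ->
    has_f_factor (X :|: Y) (rdiff E F) f.

Definition good_graph (X Y : {set T}) (E : rel T) (d rho alpha gamma : R) : Prop :=
  forall X' Y' : {set T}, X' \subset X -> Y' \subset Y -> #|X'| = #|Y'| ->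
    d / 5 <= (mindeg (X' :|: Y') (bip E X' Y'))%:R ->
    robustly_matchable X' Y' (bip E X' Y') d rho alpha gamma.

Definition good_bipartition (A B : {set T}) (E : rel T) (c : R)
    (A1 A2 : {set T}) : Prop :=
  [/\ A1 :|: A2 = A, [disjoint A1 & A2],
      (#|A1| <= #|A2|.+1)%N /\ (#|A2| <= #|A1|.+1)%N &
      forall b, b \in B ->
        c <= #|[set a in A1 | E b a]|%:R /\ c <= #|[set a in A2 | E b a]|%:R].

Definition edges_between (E : rel T) (A1 A2 : {set T}) : Prop :=
  forall u v, E u v -> ((u \in A1) && (v \in A2)) || ((u \in A2) && (v \in A1)).

Definition bipartite (E : rel T) : Prop :=
  exists A : {set T}, edges_between E A (~: A).

End Graphs.

(* In round j the graph H_{X,j} + H_{Y,j} is completed to a regular bipartite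
   graph by a subgraph F_j of G[X,Y].  Pairing X'_j with the part of {Y'_j, Y''_j}
   of the same size, and choosing a target degree t between the extreme degrees
   of H_{X,j} and H_{Y,j} (which differ by at most gamma rho d / 4K), the required
   degrees t - deg_H(v) lie in [(1 - gamma) rho d / K, rho d / K]; so robust
   matchability of the two good pieces, with F_1, ..., F_{j-1} (of maximum degree
   at most rho d) deleted, yields F_j as an f-factor.  The edges of G[X,Y] left
   after the K rounds form the last graph: it is bipartite with parts X, Y, and
   regular because G and all the other pieces are. *)

From HB Require Import structures.
From mathcomp Require Import all_boot all_order all_algebra.
From mathcomp Require Import reals zify ring lra.
Import Order.TTheory GRing.Theory Num.Theory.
Set Implicit Arguments. Unset Strict Implicit. Unset Printing Implicit Defensive.

Section Graphs.
Variable T : finType.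
Implicit Types (E F : rel T) (A B V : {set T}).

Definition relU E F : rel T := fun u v => E u v || F u v.

Lemma card_set_sum (S : finType) (P : pred S) :
  #|[set x | P x]| = \sum_x (P x : nat).
Proof.
rewrite -sum1_card big_mkcond /=; apply: eq_bigr => x _.
by rewrite inE; case: (P x).
Qed.

Lemma deg_sum E v : deg E v = \sum_u (E v u : nat).
Proof. exact: card_set_sum. Qed.

Lemma sum_setU_disjoint A B (g : T -> nat) : [disjoint A & B] ->
  \sum_(x in A :|: B) g x = \sum_(x in A) g x + \sum_(x in B) g x.
Proof. by move=> dAB; rewrite -bigU //; apply: eq_bigl => x; rewrite !inE. Qed.

Lemma nedges_sum_deg E : nedges E = (\sum_v deg E v)./2.
Proof.
rewrite /nedges card_set_sum -(pair_big predT predT (fun u v => E u v : nat)).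
by under [in RHS]eq_bigr => v _ do rewrite deg_sum.
Qed.

Lemma eq_deg E F v : E v =1 F v -> deg E v = deg F v.
Proof. by move=> eEF; rewrite !deg_sum; apply: eq_bigr => u _; rewrite eEF. Qed.

Lemma deg0 E v : (forall u, ~~ E v u) -> deg E v = 0.
Proof. by move=> nE; rewrite deg_sum big1 // => u _; rewrite (negbTE (nE u)). Qed.

Lemma deg_relU E F v :
  (forall u, E v u -> ~~ F v u) -> deg (relU E F) v = deg E v + deg F v.
Proof.
move=> dEF; rewrite !deg_sum -big_split /=; apply: eq_bigr => u _.
by rewrite /relU; case: (boolP (E v u)) => [/dEF/negbTE->|_].
Qed.

Lemma deg_relU0r E F v : (forall u, ~~ F v u) -> deg (relU E F) v = deg E v.
Proof. by move=> nF; apply: eq_deg => u; rewrite /relU (negbTE (nF u)) orbF. Qed.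

Lemma deg_relU0l E F v : (forall u, ~~ E v u) -> deg (relU E F) v = deg F v.
Proof. by move=> nE; apply: eq_deg => u; rewrite /relU (negbTE (nE u)). Qed.

Lemma mindeg_le V E v : v \in V -> mindeg V E <= deg E v.
Proof.
move=> vV; rewrite /mindeg unlock /=.
have : v \in index_enum T by rewrite mem_index_enum.
elim: (index_enum T) => [|w s IHs] //=; rewrite inE => /orP[/eqP<-|/IHs le_s].
  by rewrite vV geq_minl.
by case: (w \in V) => //; apply: leq_trans (geq_minr _ _) le_s.
Qed.

Lemma leq_maxdeg V E v : v \in V -> deg E v <= maxdeg V E.
Proof. exact: leq_bigmax_cond. Qed.

Lemma mindeg_le_maxdeg A B E F :
  #|A| = #|B| -> \sum_(x in A) deg E x = \sum_(y in B) deg F y ->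
  mindeg A E <= maxdeg B F.
Proof.
move=> cAB sAB; have [A0|[a aA]] := set_0Vmem A.
  by rewrite /mindeg /maxdeg A0 !big_set0.
have cA : 0 < #|A| by apply/card_gt0P; exists a.
rewrite -(leq_pmul2l cA) {2}cAB -!sum_nat_const.
apply: (@leq_trans (\sum_(x in A) deg E x)).
  by apply: leq_sum => x; apply: mindeg_le.
by rewrite sAB; apply: leq_sum => y; apply: leq_maxdeg.
Qed.

Lemma edges_betweenC E A B : edges_between E A B -> edges_between E B A.
Proof. by move=> eAB u v /eAB; rewrite orbC. Qed.

Lemma edges_betweenS E A B A' B' : A \subset A' -> B \subset B' ->
  edges_between E A B -> edges_between E A' B'.
Proof.
move=> /subsetP sA /subsetP sB eAB u v /eAB /orP[]/andP[uA vB].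
  by rewrite (sA u) ?(sB v).
by rewrite (sB u) ?(sA v) ?orbT.
Qed.

Lemma edges_betweenU E F A B :
  edges_between E A B -> edges_between F A B -> edges_between (relU E F) A B.
Proof. by move=> eE eF u v /orP[/eE|/eF]. Qed.

Lemma bipartite_disjoint E A B :
  [disjoint A & B] -> edges_between E A B -> bipartite E.
Proof.
move=> dAB eAB; exists A; apply: edges_betweenS eAB => //.
by apply/subsetP => x xB; rewrite inE (disjointFl dAB xB).
Qed.

Lemma sum_deg_edges_between E A B : symmetric E ->
  edges_between E A B -> [disjoint A & B] ->
  \sum_(x in A) deg E x = nedges E /\ \sum_(x in B) deg E x = nedges E.
Proof.
move=> sE eAB dAB.
have sumA_B : \sum_(x in A) deg E x = \sum_(x in B) deg E x.
  have sum_pairs C : \sum_(x in C) deg E x = \sum_x \sum_y ((x \in C) && E x y : nat).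
    rewrite big_mkcond; apply: eq_bigr => x _; rewrite deg_sum.
    by case: (x \in C); [|rewrite big1].
  rewrite !sum_pairs [RHS]exchange_big; apply: eq_bigr => x _; apply: eq_bigr => y _.
  rewrite (sE y x); case: (boolP (E x y)) => [/eAB|]; last by rewrite !andbF.
  case/orP=> /andP[xS yS]; first by rewrite xS yS.
  by rewrite (disjointFl dAB xS) (disjointFr dAB yS).
have sum_all : \sum_v deg E v = \sum_(x in A) deg E x + \sum_(x in B) deg E x.
  rewrite !(big_mkcond (fun x => x \in _)) -big_split /=; apply: eq_bigr => x _.
  case: (boolP (x \in A)) => [xA|nxA]; first by rewrite (disjointFr dAB xA) addn0.
  case: (boolP (x \in B)) => xB //; rewrite deg0 // => u; apply/negP => /eAB.
  by rewrite (negbTE nxA) (negbTE xB).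
by rewrite nedges_sum_deg sum_all -sumA_B addnn doubleK sumA_B.
Qed.

Lemma bip_sym E A B : symmetric E -> symmetric (bip E A B).
Proof.
by move=> sE u v; rewrite /bip sE; case: (u \in A); case: (u \in B);
  case: (v \in A); case: (v \in B).
Qed.

Lemma bipC E A B : bip E A B =2 bip E B A.
Proof. by move=> u v; rewrite /bip orbC. Qed.

Lemma deg_bipl E A B a :
  a \in A -> a \notin B -> deg (bip E A B) a = #|[set b in B | E a b]|.
Proof.
move=> aA naB; apply: eq_card => b; rewrite !inE /bip aA (negbTE naB) /=.
by rewrite orbF andbC.
Qed.

Lemma bip_sub E A B : subrel_of (bip E A B) E.
Proof. by move=> u v /andP[]. Qed.

Lemma edges_between_mem E A B u v :
  edges_between E A B -> E u v -> u \in A :|: B.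
Proof. by move=> eAB /eAB; rewrite inE => /orP[]/andP[-> _]; rewrite ?orbT. Qed.

Section Decomposition.
Variable I : finType.
Implicit Types (D : I -> rel T).

Lemma decomposition_sub E D : decomposition E D -> forall i, subrel_of (D i) E.
Proof. by move=> [_ [cover _]] i u v Duv; rewrite cover; apply/existsP; exists i. Qed.

Lemma deg_decomposition E D v : decomposition E D -> deg E v = \sum_i deg (D i) v.
Proof.
move=> [_ [cover disj]]; rewrite deg_sum.
have cover_sum u : E v u = \sum_i (D i v u : nat) :> nat.
  rewrite cover; case: existsP => [[i Di]|nD].
    rewrite (bigD1 i) //= Di big1 // => k ki.
    by rewrite (negbTE (disj i k v u _ Di)) // eq_sym.
  by rewrite big1 // => i _; case: (boolP (D i v u)) => // Di; case: nD; exists i.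
under eq_bigr => u _ do rewrite cover_sum.
by rewrite exchange_big; apply: eq_bigr => i _; rewrite deg_sum.
Qed.

Lemma eq_decomposition E E' D D' : E =2 E' -> (forall i, D i =2 D' i) ->
  decomposition E D -> decomposition E' D'.
Proof.
move=> eE eD [sD [cover disj]]; split; [|split].
- by move=> i u v; rewrite -!eD sD.
- by move=> u v; rewrite -eE cover; apply: eq_existsb => i; rewrite eD.
- by move=> i k u v ik; rewrite -!eD; apply: disj.
Qed.

Lemma decompositionU E F D D' : decomposition E D -> decomposition F D' ->
  (forall u v, E u v -> ~~ F u v) ->
  decomposition (relU E F) (fun i => relU (D i) (D' i)).
Proof.
move=> dD dD' dEF; have [sD [coverD disjD]] := dD; have [sD' [coverD' disjD']] := dD'.
have DE i u v : D i u v -> E u v by move/(decomposition_sub dD).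
have D'F i u v : D' i u v -> F u v by move/(decomposition_sub dD').
split; [|split].
- by move=> i u v; rewrite /relU sD sD'.
- move=> u v; rewrite /relU coverD coverD'; apply/orP/existsP.
    by case=> /existsP[i Di]; exists i; rewrite Di ?orbT.
  by case=> i /orP[Di|Di]; [left|right]; apply/existsP; exists i.
- move=> i k u v ik; rewrite /relU negb_or.
  case/orP=> [Di|D'i]; apply/andP; split.
  + exact: disjD Di.
  + by apply/negP => /D'F; apply/negP/dEF/(DE _ _ _ Di).
  + by apply/negP => /DE /dEF; rewrite (D'F _ _ _ D'i).
  + exact: disjD' D'i.
Qed.

Lemma regular_decomposition E D i0 : decomposition E D -> regular_on setT E ->
  (forall i, i != i0 -> regular_on setT (D i)) -> regular_on setT (D i0).
Proof.
move=> dD [r regE] regD.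
have [v0 _|T0] := pickP (@predT T); last by exists 0 => v; have := T0 v.
have split_i0 u : deg E u = deg (D i0) u + \sum_(i | i != i0) deg (D i) u.
  by rewrite (deg_decomposition u dD) (bigD1 i0).
exists (deg (D i0) v0) => v _; apply/eqP.
rewrite -(eqn_add2r (\sum_(i | i != i0) deg (D i) v)) -split_i0.
have -> : \sum_(i | i != i0) deg (D i) v = \sum_(i | i != i0) deg (D i) v0.
  by apply: eq_bigr => i /regD [ri regi]; rewrite !regi ?inE.
by rewrite -split_i0 !regE ?inE.
Qed.

Lemma decomposition_exists D : (forall i, symmetric (D i)) ->
  (forall i k u v, i != k -> D i u v -> ~~ D k u v) ->
  decomposition (fun u v => [exists i, D i u v]) D.
Proof. by move=> sD disj; split. Qed.

End Decomposition.

Definition extend_family K (D : 'I_K -> rel T) (L : rel T) : 'I_K.+1 -> rel T :=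
  fun i => if unlift ord_max i is Some j then D j else L.

Lemma extend_family_lift K (D : 'I_K -> rel T) L j :
  extend_family D L (lift ord_max j) = D j.
Proof. by rewrite /extend_family liftK. Qed.

Lemma extend_family_max K (D : 'I_K -> rel T) L : extend_family D L ord_max = L.
Proof. by rewrite /extend_family unlift_none. Qed.

Lemma decomposition_extend K E (D : 'I_K -> rel T) L :
  decomposition E D -> symmetric L -> (forall u v, L u v -> ~~ E u v) ->
  decomposition (relU E L) (extend_family D L).
Proof.
move=> dD sL dLE; have [sD [cover disj]] := dD.
have DE j u v : D j u v -> E u v by move/(decomposition_sub dD).
split; [|split].
- by move=> i; case: (unliftP ord_max i) => [j ->|->];
    rewrite ?extend_family_lift ?extend_family_max.
- move=> u v; rewrite /relU cover; apply/orP/existsP.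
    case=> [/existsP[j Dj]|Luv]; last by exists ord_max; rewrite extend_family_max.
    by exists (lift ord_max j); rewrite extend_family_lift.
  case=> i; case: (unliftP ord_max i) => [j ->|->];
    rewrite ?extend_family_lift ?extend_family_max.
    by move=> Dj; left; apply/existsP; exists j.
  by right.
- move=> i k u v;
  case: (unliftP ord_max i) => [j ->|->]; case: (unliftP ord_max k) => [l ->|->];
    rewrite ?extend_family_lift ?extend_family_max ?eqxx //.
  + by move=> jl; apply: disj; apply: contraNneq jl => ->.
  + by move=> _ /DE Euv; apply/negP => /dLE; rewrite Euv.
  + by move=> _ /dLE nE; apply/negP => /DE; apply/negP.
Qed.

Lemma lift_max_widen K (j : 'I_K) : lift ord_max j = widen_ord (leqnSn K) j.
Proof. by apply: val_inj; rewrite /= /bump leqNgt ltn_ord. Qed.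

End Graphs.

Arguments decomposition_sub {T I E D} dD i [u v].

Local Open Scope ring_scope.

Lemma greedy_disjoint_family (R : numDomainType) (T : finType) K (c B : R)
    (P : 'I_K -> rel T -> Prop) :
  0 <= c -> K%:R * c <= B ->
  (forall (j : 'I_K) Fp, symmetric Fp -> (forall v, (deg Fp v)%:R <= B) ->
     exists F, [/\ P j F, symmetric F, forall v, (deg F v)%:R <= c
                 & forall u v, F u v -> ~~ Fp u v]) ->
  exists Fs : 'I_K -> rel T, [/\ forall j, P j (Fs j), forall j, symmetric (Fs j),
    forall j v, (deg (Fs j) v)%:R <= c
    & forall j k u v, j != k -> Fs j u v -> ~~ Fs k u v].
Proof.
move=> c_ge0; elim: K P => [|K IHK] P KcB step.
  by exists (fun _ _ _ => false); split=> -[].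
have [||Fs [PFs sFs dFs disjFs]] := IHK (fun j => P (widen_ord (leqnSn K) j)).
- by apply: le_trans KcB; rewrite ler_wpM2r // ler_nat.
- by move=> j; apply: step.
pose Fp u v := [exists j, Fs j u v].
have dFp : decomposition Fp Fs by apply: decomposition_exists.
have [||F [PF sF dF FFp]] := step ord_max Fp.
- by move=> u v; apply: eq_existsb => j; rewrite sFs.
- have KcK : K%:R * c <= K.+1%:R * c by rewrite ler_wpM2r // ler_nat.
  move=> v; apply: le_trans (le_trans KcK KcB).
  rewrite (deg_decomposition v dFp) natr_sum -[K in K%:R * _]card_ord mulr_natl -sumr_const.
  by apply: ler_sum => j _; apply: dFs.
exists (extend_family Fs F); split.
- by move=> i; case: (unliftP ord_max i) => [j ->|->];
    rewrite ?extend_family_lift ?extend_family_max ?lift_max_widen.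
- by move=> i; case: (unliftP ord_max i) => [j ->|->];
    rewrite ?extend_family_lift ?extend_family_max.
- by move=> i v; case: (unliftP ord_max i) => [j ->|->];
    rewrite ?extend_family_lift ?extend_family_max.
- by case: (decomposition_extend dFp sF FFp) => _ [].
Qed.

Section Partition.
Variables (T : finType) (G : rel T) (X Y : {set T}).
Hypotheses (XY : X :|: Y = setT) (dXY : [disjoint X & Y]).

Lemma mem_partition v : (v \in Y) = (v \notin X).
Proof.
have := in_setT v; rewrite -XY inE.
by case: (boolP (v \in X)) => [/(disjointFr dXY)->|_ /= ->].
Qed.

Lemma graph_split : G =2 relU (relU (induced G X) (induced G Y)) (bip G X Y).
Proof.
move=> u v; rewrite /relU /induced /bip !mem_partition.
by case: (G u v); case: (u \in X); case: (v \in X).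
Qed.

Lemma induced_disjoint u v : induced G X u v -> ~~ induced G Y u v.
Proof. by case/and3P=> _ uX _; rewrite /induced mem_partition uX !andbF. Qed.

Lemma induced_bip_disjoint u v :
  relU (induced G X) (induced G Y) u v -> ~~ bip G X Y u v.
Proof.
rewrite /relU /induced /bip !mem_partition.
by case: (G u v); case: (u \in X); case: (v \in X).
Qed.

Lemma decomposition_rounds K (HX HY Fs : 'I_K -> rel T) :
  symmetric G -> decomposition (induced G X) HX -> decomposition (induced G Y) HY ->
  (forall j, symmetric (Fs j)) -> (forall j, subrel_of (Fs j) (bip G X Y)) ->
  (forall j k u v, j != k -> Fs j u v -> ~~ Fs k u v) ->
  decomposition G (extend_family (fun j => relU (relU (HX j) (HY j)) (Fs j))
                                 (rdiff (bip G X Y) (fun u v => [exists j, Fs j u v]))).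
Proof.
move=> sG dHX dHY sFs FsG disjFs.
pose nil : rel T := fun _ _ => false.
have nil_disj (E : rel T) u v : nil u v -> ~~ E u v by [].
pose L := rdiff (bip G X Y) (fun u v => [exists j, Fs j u v]).
have dFs := decomposition_exists sFs disjFs.
have LFs u v : L u v -> ~~ [exists j, Fs j u v] by case/andP.
have sL : symmetric L.
  move=> u v; rewrite /L /rdiff (bip_sym _ _ sG u v); congr (_ && ~~ _).
  by apply: eq_existsb => j; rewrite sFs.
have disjXY u v : relU (induced G X) nil u v -> ~~ relU (induced G Y) nil u v.
  by rewrite /relU !orbF => /induced_disjoint.
have disjB u v : relU (relU (induced G X) nil) (relU (induced G Y) nil) u v ->
    ~~ relU (fun u v => [exists j, Fs j u v]) L u v.
  rewrite /relU !orbF => /induced_bip_disjoint nB.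
  by apply/negP => /orP[/existsP[j /FsG Buv]|/andP[Buv _]]; rewrite Buv in nB.
have dX := decomposition_extend (L := nil) dHX (fun _ _ => erefl) (nil_disj _).
have dY := decomposition_extend (L := nil) dHY (fun _ _ => erefl) (nil_disj _).
have dG := decompositionU (decompositionU dX dY disjXY)
  (decomposition_extend dFs sL LFs) disjB.
apply: eq_decomposition dG.
- move=> u v; rewrite graph_split /relU !orbF; congr (_ || _).
  apply/orP/idP => [[/existsP[j /FsG]|/andP[]] //|Buv].
  by case: (boolP [exists j, Fs j u v]) => FsUV; [left|right; apply/andP].
- by move=> i u v; case: (unliftP ord_max i) => [j ->|->];
    rewrite /relU ?extend_family_lift ?extend_family_max.
Qed.

End Partition.

Section Bounds.
Variables (R : numDomainType) (T : finType).
Implicit Types (E : rel T) (V : {set T}).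

Lemma ler_mindeg V E (c : R) v0 : v0 \in V ->
  (forall v, v \in V -> c <= (deg E v)%:R) -> c <= (mindeg V E)%:R.
Proof.
move=> v0V lb; apply: (big_ind (fun m : nat => c <= m%:R)).
- by apply: le_trans (lb _ v0V) _; rewrite ler_nat leq_maxdeg.
- by move=> m m' cm cm'; rewrite /minn; case: ifP.
- exact: lb.
Qed.

Lemma maxdeg_ler V E (c : R) : 0 <= c ->
  (forall v, v \in V -> (deg E v)%:R <= c) -> (maxdeg V E)%:R <= c.
Proof.
move=> c0 ub; apply: (big_ind (fun m : nat => m%:R <= c)) => //.
by move=> m m' cm cm'; rewrite /maxn; case: ifP.
Qed.

End Bounds.

Lemma good_graph_factor (R : realType) (T : finType) (d rho alpha gamma al : R)
    (E : rel T) (X Y A B : {set T}) (Fp : rel T) (f : T -> int) :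
  good_graph X Y E d rho alpha gamma ->
  A \subset X -> B \subset Y -> #|A| = #|B| -> [disjoint A & B] ->
  (forall a, a \in A -> d / 5 <= #|[set b in B | E a b]|%:R) ->
  (forall b, b \in B -> d / 5 <= #|[set a in A | E b a]|%:R) ->
  symmetric E -> symmetric Fp -> 0 <= rho * d ->
  (forall v, (deg Fp v)%:R <= rho * d) -> 0 < al -> al <= alpha ->
  (forall v, v \in A :|: B ->
     (1 - gamma) * al * d <= (f v)%:~R /\ (f v)%:~R <= al * d) ->
  \sum_(x in A) f x = \sum_(y in B) f y ->
  exists S : rel T, [/\ symmetric S, subrel_of S (rdiff (bip E A B) Fp)
    & forall v, v \in A :|: B -> (deg S v)%:Z = f v].
Proof.
move=> goodE sAX sBY cAB dAB degA degB sE sFp rd0 dFp al0 al_le fb fsum.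
have [AB0|[v0 v0AB]] := set_0Vmem (A :|: B).
  by exists (fun _ _ => false); split=> // v; rewrite AB0 inE.
have mindegE : d / 5 <= (mindeg (A :|: B) (bip E A B))%:R.
  apply: (ler_mindeg v0AB) => v /setUP[vA|vB].
    by rewrite deg_bipl ?(disjointFr dAB vA) ?degA.
  by rewrite (eq_deg (bipC _ _ _ v)) deg_bipl ?(disjointFl dAB vB) ?degB.
pose F u v := bip E A B u v && Fp u v.
have [|||S [sS SF degS]] := goodE A B sAX sBY cAB mindegE F _ _ _ al al0 al_le f fb fsum.
- by move=> u v; rewrite /F (bip_sym _ _ sE u v) sFp.
- by move=> u v /andP[].
- apply: maxdeg_ler => // v _; apply: le_trans (dFp v); rewrite ler_nat.
  by apply: subset_leq_card; apply/subsetP => u; rewrite !inE => /andP[].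
exists S; split=> // u v /SF; rewrite /rdiff /F.
by case: (bip E A B u v).
Qed.

Lemma target_degree (R : realType) (T : finType) (X Y : {set T}) (HX HY : rel T)
    (c s : R) :
  0 <= c -> 1 / 2 <= s -> #|X| = #|Y| ->
  \sum_(x in X) deg HX x = \sum_(y in Y) deg HY y ->
  (maxdeg X HX)%:R - (mindeg X HX)%:R <= s ->
  (maxdeg Y HY)%:R - (mindeg Y HY)%:R <= s ->
  exists t : nat,
    (forall x, x \in X -> c - 4 * s <= t%:R - (deg HX x)%:R <= c) /\
    (forall y, y \in Y -> c - 4 * s <= t%:R - (deg HY y)%:R <= c).
Proof.
move=> c0 s_ge cXY sXY dX dY.
have aXbY : (mindeg X HX)%:R <= (maxdeg Y HY)%:R :> R.
  by rewrite ler_nat mindeg_le_maxdeg.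
have aYbX : (mindeg Y HY)%:R <= (maxdeg X HX)%:R :> R.
  by rewrite ler_nat mindeg_le_maxdeg.
have bndX x : x \in X ->
    ((mindeg X HX)%:R <= (deg HX x)%:R :> R) && ((deg HX x)%:R <= (maxdeg X HX)%:R :> R).
  by move=> xX; rewrite !ler_nat mindeg_le ?leq_maxdeg.
have bndY y : y \in Y ->
    ((mindeg Y HY)%:R <= (deg HY y)%:R :> R) && ((deg HY y)%:R <= (maxdeg Y HY)%:R :> R).
  by move=> yY; rewrite !ler_nat mindeg_le ?leq_maxdeg.
have /andP[trunc_le trunc_gt] := truncn_itv c0; rewrite -natr1 in trunc_gt.
have [le_aXaY|lt_aYaX] := leqP (mindeg X HX) (mindeg Y HY).
  rewrite -(ler_nat R) in le_aXaY; exists (mindeg X HX + Num.trunc c)%N.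
  rewrite natrD; split=> v vS;
  [have /andP[lb ub] := bndX v vS|have /andP[lb ub] := bndY v vS];
  apply/andP; split; lra.
rewrite -(ltr_nat R) in lt_aYaX; exists (mindeg Y HY + Num.trunc c)%N.
rewrite natrD; split=> v vS;
  [have /andP[lb ub] := bndX v vS|have /andP[lb ub] := bndY v vS];
  apply/andP; split; lra.
Qed.

Lemma good_bipartitionC (T : finType) (R : realType) (A B : {set T})
    (E : rel T) (c : R) A1 A2 :
  good_bipartition A B E c A1 A2 -> good_bipartition A B E c A2 A1.
Proof.
case=> A12 dA12 [le12 le21] degB; split=> //; first by rewrite setUC.
- by rewrite disjoint_sym.
- by move=> b /degB [].
Qed.

Lemma card_good_bipartition (T : finType) (R : realType) (A B : {set T})
    (E : rel T) (c : R) A1 A2 :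
  good_bipartition A B E c A1 A2 -> #|A| = (#|A1| + #|A2|)%N.
Proof.
by case=> <- dA12 _ _; rewrite -cardsUI (disjoint_setI0 dA12) cards0 addn0.
Qed.

Lemma good_bipartitions_match (T : finType) (R : realType) (X Y : {set T})
    (E : rel T) (c : R) X1 X2 Y1 Y2 :
  #|X| = #|Y| -> good_bipartition X Y E c X1 X2 -> good_bipartition Y X E c Y1 Y2 ->
  (#|X1| = #|Y1| /\ #|X2| = #|Y2|) \/ (#|X1| = #|Y2| /\ #|X2| = #|Y1|).
Proof.
move=> cXY gX gY; move: cXY (card_good_bipartition gX) (card_good_bipartition gY).
by case: gX => _ _ [] + + _; case: gY => _ _ [] + + _; lia.
Qed.

Lemma exists_matched_bipartition (T : finType) (R : realType) (X Y : {set T})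
    (E H : rel T) (c : R) X1 X2 Y1 Y2 :
  #|X| = #|Y| -> good_bipartition X Y E c X1 X2 -> good_bipartition Y X E c Y1 Y2 ->
  edges_between H Y1 Y2 ->
  exists P Q, [/\ good_bipartition Y X E c P Q, edges_between H P Q,
                  #|X1| = #|P| & #|X2| = #|Q|].
Proof.
move=> cXY gX gY eY; case: (good_bipartitions_match cXY gX gY) => [[c1 c2]|[c1 c2]].
  by exists Y1, Y2.
by exists Y2, Y1; split=> //; [apply: good_bipartitionC|apply: edges_betweenC].
Qed.

Lemma sum_nat_subz (T : finType) (A : {set T}) (g : T -> nat) (t : nat) :
  \sum_(x in A) (t%:Z - (g x)%:Z) = (#|A| * t)%:Z - (\sum_(x in A) g x)%:Z.
Proof.
rewrite sumrB sumr_const (big_morph Posz PoszD (erefl _)).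
by rewrite -mulr_natr natz PoszM mulrC.
Qed.

Lemma disjoint_sides (T : finType) (X Y A1 A2 B1 B2 : {set T}) :
  [disjoint X & Y] -> A1 \subset X -> A2 \subset X -> B1 \subset Y -> B2 \subset Y ->
  [disjoint A1 & A2] -> [disjoint B1 & B2] -> [disjoint A1 :|: B1 & A2 :|: B2].
Proof.
move=> dXY /subsetP sA1 /subsetP sA2 /subsetP sB1 /subsetP sB2 dA dB.
rewrite -setI_eq0; apply/eqP/setP => v; rewrite !inE.
apply/negbTE/negP => /andP[/orP[vA1|vB1] /orP[vA2|vB2]].
- by rewrite (disjointFr dA vA1) in vA2.
- by move: (disjointFr dXY (sA1 v vA1)); rewrite sB2.
- by move: (disjointFr dXY (sA2 v vA2)); rewrite sB1.
- by rewrite (disjointFr dB vB1) in vB2.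
Qed.

Section Factor.
Variables (R : realType) (T : finType) (d rho alpha gamma : R) (G : rel T).
Variables X Y : {set T}.
Hypotheses (d_gt0 : 0 < d) (rho_gt0 : 0 < rho).
Hypotheses (sG : symmetric G) (XY : X :|: Y = setT) (dXY : [disjoint X & Y]).
Hypothesis cXY : #|X| = #|Y|.
Hypothesis goodG : good_graph X Y (bip G X Y) d rho alpha gamma.

Lemma matched_factor (X1 X2 P Q : {set T}) (Fp : rel T) (al : R) (f : T -> int) :
  good_bipartition X Y (bip G X Y) (d / 5) X1 X2 ->
  good_bipartition Y X (bip G X Y) (d / 5) P Q ->
  #|X1| = #|P| -> #|X2| = #|Q| ->
  symmetric Fp -> (forall v, (deg Fp v)%:R <= rho * d) -> 0 < al -> al <= alpha ->
  (forall v, (1 - gamma) * al * d <= (f v)%:~R /\ (f v)%:~R <= al * d) ->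
  \sum_(x in X1) f x = \sum_(y in P) f y -> \sum_(x in X2) f x = \sum_(y in Q) f y ->
  exists S : rel T, [/\ symmetric S, subrel_of S (rdiff (bip G X Y) Fp),
     forall v, (deg S v)%:Z = f v & edges_between S (X1 :|: Q) (X2 :|: P)].
Proof.
move=> gX gY cX1P cX2Q sFp dFp al_gt0 al_le fb sum1 sum2.
case: (gX) => X12 dX12 _ degX; case: (gY) => PQ dPQ _ degY.
have sX1 : X1 \subset X by rewrite -X12 subsetUl.
have sX2 : X2 \subset X by rewrite -X12 subsetUr.
have sP : P \subset Y by rewrite -PQ subsetUl.
have sQ : Q \subset Y by rewrite -PQ subsetUr.
have rd0 : 0 <= rho * d by rewrite ltW ?mulr_gt0.
have factor (A B : {set T}) : A \subset X -> B \subset Y -> #|A| = #|B| ->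
    (forall a, a \in A -> d / 5 <= #|[set b in B | bip G X Y a b]|%:R) ->
    (forall b, b \in B -> d / 5 <= #|[set a in A | bip G X Y b a]|%:R) ->
    \sum_(x in A) f x = \sum_(y in B) f y ->
    exists S : rel T, [/\ symmetric S, subrel_of S (rdiff (bip (bip G X Y) A B) Fp)
      & forall v, v \in A :|: B -> (deg S v)%:Z = f v].
  move=> sA sBY cAB degA degB sumAB.
  apply: (good_graph_factor goodG sA sBY cAB _ degA degB _ sFp rd0 dFp al_gt0 al_le
    (fun v _ => fb v) sumAB).
  - exact: disjointWl sA (disjointWr sBY dXY).
  - exact: bip_sym.
have [S1 [sS1 S1F degS1]] := factor X1 P sX1 sP cX1P
  (fun a aX1 => (degY a (subsetP sX1 a aX1)).1)
  (fun b bP => (degX b (subsetP sP b bP)).1) sum1.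
have [S2 [sS2 S2F degS2]] := factor X2 Q sX2 sQ cX2Q
  (fun a aX2 => (degY a (subsetP sX2 a aX2)).2)
  (fun b bQ => (degX b (subsetP sQ b bQ)).2) sum2.
have eS1 : edges_between S1 X1 P.
  by move=> u v /S1F /andP[/andP[]].
have eS2 : edges_between S2 X2 Q.
  by move=> u v /S2F /andP[/andP[]].
have sides_disj v : v \in X1 :|: P -> v \notin X2 :|: Q.
  by move/(disjointFr (disjoint_sides dXY sX1 sX2 sP sQ dX12 dPQ))->.
have degS v : deg (relU S1 S2) v = (deg S1 v + deg S2 v)%N.
  by apply: deg_relU => u /(edges_between_mem eS1) /sides_disj;
    apply: contra => /(edges_between_mem eS2).
exists (relU S1 S2); split.
- by move=> u v; rewrite /relU sS1 sS2.
- by move=> u v /orP[/S1F|/S2F] /andP[/bip_sub Guv nFp]; rewrite /rdiff Guv nFp.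
- move=> v; rewrite degS.
  have : (v \in X1 :|: P) || (v \in X2 :|: Q).
    have := in_setT v; rewrite -XY -X12 -PQ !inE.
    by case: (v \in X1); case: (v \in X2); case: (v \in P).
  case/orP=> [vX1P|vX2Q].
    rewrite (@deg0 _ S2) ?addn0 ?degS1 // => u.
    by apply/negP => /(edges_between_mem eS2); apply/negP/sides_disj.
  rewrite (@deg0 _ S1) ?degS2 // => u.
  by apply/negP => /(edges_between_mem eS1) /sides_disj; rewrite vX2Q.
- apply: edges_betweenU;
    [apply: edges_betweenS eS1|apply: edges_betweenS (edges_betweenC eS2)];
    by rewrite ?subsetUl ?subsetUr.
Qed.

Variable K : nat.
Hypotheses (K_ge : rho / alpha <= K%:R) (K_le : K%:R <= gamma * rho * d / 2).
Hypothesis alpha_gt0 : 0 < alpha.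

Local Notation c := (rho / K%:R * d).
Local Notation s := (gamma * rho * d / (4 * K%:R)).

Lemma K_gt0 : 0 < K%:R :> R.
Proof. by apply: lt_le_trans K_ge; rewrite divr_gt0. Qed.

Lemma budget_ge0 : 0 <= c.
Proof. by rewrite ltW // !mulr_gt0 ?invr_gt0 ?K_gt0. Qed.

Lemma K_mul_budget : K%:R * c = rho * d.
Proof. by field; rewrite gt_eqF ?K_gt0. Qed.

Lemma rate_gt0 : 0 < rho / K%:R.
Proof. by rewrite divr_gt0 ?K_gt0. Qed.

Lemma rate_le_alpha : rho / K%:R <= alpha.
Proof. by rewrite ler_pdivrMr ?K_gt0 // mulrC -ler_pdivrMr. Qed.

Lemma slack_ge_half : 1 / 2 <= s.
Proof.
have K0 := K_gt0; have := K_le.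
rewrite ler_pdivlMr ?mulr_gt0 // ler_pdivlMr //; lra.
Qed.

Lemma rate_lower_bound : (1 - gamma) * (rho / K%:R) * d = c - 4 * s.
Proof. by field; rewrite gt_eqF ?K_gt0. Qed.

Lemma regular_bipartite_completion (HXj HYj : rel T) (X1 X2 Y1 Y2 : {set T}) (Fp : rel T) :
  symmetric HXj -> subrel_of HXj (induced G X) ->
  symmetric HYj -> subrel_of HYj (induced G Y) ->
  (maxdeg X HXj)%:R - (mindeg X HXj)%:R <= s ->
  (maxdeg Y HYj)%:R - (mindeg Y HYj)%:R <= s ->
  nedges HXj = nedges HYj ->
  edges_between HXj X1 X2 -> good_bipartition X Y (bip G X Y) (d / 5) X1 X2 ->
  edges_between HYj Y1 Y2 -> good_bipartition Y X (bip G X Y) (d / 5) Y1 Y2 ->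
  symmetric Fp -> (forall v, (deg Fp v)%:R <= rho * d) ->
  exists S : rel T, [/\ symmetric S, subrel_of S (rdiff (bip G X Y) Fp),
    forall v, (deg S v)%:R <= c, regular_on setT (relU (relU HXj HYj) S)
    & bipartite (relU (relU HXj HYj) S)].
Proof.
move=> sHX HX_X sHY HY_Y dX dY eqe eX gX eY gY sFp dFp.
have [P [Q [gPQ ePQ cX1P cX2Q]]] := exists_matched_bipartition cXY gX gY eY.
case: (gX) => X12 dX12 _ _; case: (gPQ) => PQ dPQ _ _.
have [sum_X1 sum_X2] := sum_deg_edges_between sHX eX dX12.
have [sum_P sum_Q] := sum_deg_edges_between sHY ePQ dPQ.
have sum_XY : \sum_(x in X) deg HXj x = \sum_(y in Y) deg HYj y.
  by rewrite -X12 -PQ !sum_setU_disjoint // sum_X1 sum_X2 sum_P sum_Q eqe.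
have [t [tX tY]] := target_degree budget_ge0 slack_ge_half cXY sum_XY dX dY.
pose h v := deg (relU HXj HYj) v.
have hX x : x \in X -> h x = deg HXj x.
  move=> xX; rewrite /h deg_relU0r // => u.
  by apply/negP => /HY_Y /and3P[_ xY _]; rewrite (disjointFr dXY xX) in xY.
have hY y : y \in Y -> h y = deg HYj y.
  move=> yY; rewrite /h deg_relU0l // => u.
  by apply/negP => /HX_X /and3P[_ yX _]; rewrite (disjointFr dXY yX) in yY.
pose f v := t%:Z - (h v)%:Z.
have fb v : (1 - gamma) * (rho / K%:R) * d <= (f v)%:~R /\ (f v)%:~R <= c.
  rewrite rate_lower_bound /f intrB; apply/andP.
  have := in_setT v; rewrite -XY inE => /orP[vX|vY].
    by rewrite hX //; apply: tX.
  by rewrite hY //; apply: tY.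
have sum_f (A : {set T}) (H : rel T) : {in A, forall v, h v = deg H v} ->
    \sum_(x in A) f x = (#|A| * t)%:Z - (\sum_(x in A) deg H x)%:Z.
  by move=> hA; rewrite -sum_nat_subz; apply: eq_bigr => x xA; rewrite /f hA.
have sX1 : X1 \subset X by rewrite -X12 subsetUl.
have sX2 : X2 \subset X by rewrite -X12 subsetUr.
have sP : P \subset Y by rewrite -PQ subsetUl.
have sQ : Q \subset Y by rewrite -PQ subsetUr.
have [||S [sS SF degS eS]] :=
  matched_factor gX gPQ cX1P cX2Q sFp dFp rate_gt0 rate_le_alpha fb.
- rewrite (sum_f _ HXj) ?(sum_f _ HYj) ?sum_X1 ?sum_P ?cX1P ?eqe //.
  + by move=> y /(subsetP sP); apply: hY.
  + by move=> x /(subsetP sX1); apply: hX.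
- rewrite (sum_f _ HXj) ?(sum_f _ HYj) ?sum_X2 ?sum_Q ?cX2Q ?eqe //.
  + by move=> y /(subsetP sQ); apply: hY.
  + by move=> x /(subsetP sX2); apply: hX.
exists S; split=> //.
- by move=> v; have [_] := fb v; rewrite -(degS v).
- exists t => v _; rewrite deg_relU.
    by move/eqP: (degS v); rewrite /f eq_sym subr_eq -PoszD addnC => /eqP[].
  move=> u Huv; apply/negP => /SF /andP[+ _]; apply/negP.
  by apply: (induced_bip_disjoint XY dXY); case/orP: Huv => [/HX_X|/HY_Y] Iuv;
    rewrite /relU Iuv ?orbT.
- apply: (bipartite_disjoint (disjoint_sides dXY sX1 sX2 sQ sP dX12 _)).
    by rewrite disjoint_sym.
  apply: edges_betweenU => //; apply: edges_betweenU.
    by apply: edges_betweenS eX; apply: subsetUl.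
  by apply: edges_betweenS (edges_betweenC ePQ); apply: subsetUr.
Qed.

End Factor.

Unset Implicit Arguments.

Theorem lemma4p6 (R : realType) (n : nat) (d rho alpha gamma : R)
  (G : rel 'I_n) (X Y : {set 'I_n}) (K : nat)
  (HX : 'I_K -> rel 'I_n) (HY : 'I_K -> rel 'I_n)
  (X' X'' Y' Y'' : 'I_K -> {set 'I_n}) :
  ~~ odd n ->
  0 < d -> 0 < rho -> 0 < alpha -> 0 < gamma ->
  simple_graph G -> regular_on setT G ->
  X :|: Y = setT -> [disjoint X & Y] -> #|X| = #|Y| ->
  good_graph X Y (bip G X Y) d rho alpha gamma ->
  rho / alpha <= K%:R -> K%:R <= gamma * rho * d / 2 ->
  decomposition (induced G X) HX ->
  decomposition (induced G Y) HY ->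
  (forall j : 'I_K,
     [/\ (maxdeg X (HX j))%:R - (mindeg X (HX j))%:R
           <= gamma * rho * d / (4 * K%:R),
         (maxdeg Y (HY j))%:R - (mindeg Y (HY j))%:R
           <= gamma * rho * d / (4 * K%:R),
         nedges (HX j) = nedges (HY j),
         edges_between (HX j) (X' j) (X'' j)
           /\ good_bipartition X Y (bip G X Y) (d / 5) (X' j) (X'' j) &
         edges_between (HY j) (Y' j) (Y'' j)
           /\ good_bipartition Y X (bip G X Y) (d / 5) (Y' j) (Y'' j)]) ->
  exists D : 'I_K.+1 -> rel 'I_n,
    decomposition G D /\
    (forall i, regular_on setT (D i) /\ bipartite (D i)).
Proof.
move=> _ d_gt0 rho_gt0 alpha_gt0 _ [sG _] regG XY dXY cXY goodG K_ge K_le dHX dHY hyp.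
pose Dj j F := relU (relU (HX j) (HY j)) F.
have [|||Fs [roundFs sFs _ disjFs]] := greedy_disjoint_family (c := rho / K%:R * d)
  (B := rho * d)
  (P := fun j F => [/\ subrel_of F (bip G X Y), regular_on setT (Dj j F)
                      & bipartite (Dj j F)]).
- by have := budget_ge0 d_gt0 rho_gt0 K_ge alpha_gt0.
- by rewrite (K_mul_budget d rho_gt0 K_ge alpha_gt0).
- move=> j Fp sFp dFp; have [dX dY eqe [eX gX] [eY gY]] := hyp j.
  have [S [sS SF dS regS bipS]] := regular_bipartite_completion d_gt0 rho_gt0 sG XY dXY
    cXY goodG K_ge K_le alpha_gt0 (proj1 dHX j) (decomposition_sub dHX j) (proj1 dHY j)
    (decomposition_sub dHY j) dX dY eqe eX gX eY gY sFp dFp.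
  by exists S; split=> // [|u v /SF /andP[] //]; split=> // u v /SF /andP[].
have FsG j : subrel_of (Fs j) (bip G X Y) by case: (roundFs j).
have dD := decomposition_rounds XY dXY sG dHX dHY sFs FsG disjFs.
exists (extend_family (fun j => Dj j (Fs j))
                      (rdiff (bip G X Y) (fun u v => [exists j, Fs j u v]))).
split=> // i; case: (unliftP ord_max i) => [j ->|->]; clear i.
  by rewrite extend_family_lift; case: (roundFs j).
rewrite extend_family_max; split.
  have := regular_decomposition (i0 := ord_max) dD regG.
  rewrite extend_family_max; apply=> k.
  case: (unliftP ord_max k) => [j ->|->]; last by rewrite eqxx.
  by rewrite extend_family_lift; case: (roundFs j).
by apply: (bipartite_disjoint dXY) => u v /andP[/andP[]].
Qed.
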